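(* Fix a finite vertex set $\mathcal{V}$ and a partition $\mathcal{C}$ of $\mathcal{V}$ in which at least one part has at least two vertices. For an attributed graph $G$ on $\mathcal{V}$, let $n_\triangle^{intra}(G)$ be the number of triangles of $G$ all three of whose vertices lie in the same part of $\mathcal{C}$. Then the global sensitivity of $n_\triangle^{intra}$ is $$\max_{G\sim_{at}G'}\bigl|n_\triangle^{intra}(G)-n_\triangle^{intra}(G')\bigr|=\max_{C\in\mathcal{C}}\{|C|-2\}.$$
   Context: An attributed graph is a triple $G=(\mathcal{V},\mathcal{E},X)$ with $\mathcal{V}$ a finite vertex set, $\mathcal{E}$ a set of undirected edges (simple graph), and $X$ a binary matrix assigning to each vertex an attribute vector. Two attributed graphs $G=(\mathcal{V},\mathcal{E},X)$ and $G'=(\mathcal{V},\mathcal{E}',X')$ on the same vertex set are neighbouring, $G\sim_{at}G'$, iff either $|\mathcal{E}\,\triangle\,\mathcal{E}'|=1$ (and the attributes coincide), or they have the same edges and differ in the attribute vector of exactly one vertex. The partition $\mathcal{C}$ is fixed (the same for all graphs considered). *)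

From mathcomp Require Import all_boot.
Set Implicit Arguments. Unset Strict Implicit. Unset Printing Implicit Defensive.

(* An attributed graph on the finite vertex type V with attribute vectors of
   length d: (edge set, attribute map).  Edges are 2-element vertex sets. *)
Definition agraph (V : finType) (d : nat) : finType :=
  ({set {set V}} * {ffun V -> d.-tuple bool})%type.

Definition edges (V : finType) d (G : agraph V d) : {set {set V}} := G.1.
Definition attrs (V : finType) d (G : agraph V d) : {ffun V -> d.-tuple bool} := G.2.

Definition simple_ag (V : finType) d (G : agraph V d) : bool :=
  [forall e in edges G, #|e| == 2].

Definition at_neighbour (V : finType) d (G G' : agraph V d) : bool :=
  ((#|(edges G :\: edges G') :|: (edges G' :\: edges G)| == 1)
     && (attrs G == attrs G'))
  || ((edges G == edges G')
     && (#|[set v | attrs G v != attrs G' v]| == 1)).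

Definition n_tri_intra (V : finType) d (P : {set {set V}}) (G : agraph V d) : nat :=
  #|[set T : {set V} | [&& #|T| == 3,
        [forall x in T, forall y in T, (x != y) ==> ([set x; y] \in edges G)]
      & [exists C in P, T \subset C]]]|.

Definition distn (a b : nat) : nat := (a - b) + (b - a).

Definition global_sensitivity (V : finType) d (f : agraph V d -> nat) : nat :=
  \max_(p : agraph V d * agraph V d |
          [&& simple_ag p.1, simple_ag p.2 & at_neighbour p.1 p.2])
     distn (f p.1) (f p.2).

From mathcomp Require Import all_boot zify.
Set Implicit Arguments. Unset Strict Implicit.

(* Neighbours differing only in attributes have the same edges, hence the same
   count. Otherwise their edge sets differ in one edge {x, y}; every intra-part
   triangle gained or lost contains it, lies in the part C of x and is
   determined by its third vertex, so at most |C| - 2 triangles change.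
   Conversely, deleting an edge from the complete graph on a part C destroys
   exactly the |C| - 2 triangles through that edge. *)

Section OnePointExtensions.
Variable T : finType.
Implicit Types (A C X : {set T}) (S : {set {set T}}).

Lemma setU1_inj_notin A : {in ~: A &, injective (fun w => w |: A)}.
Proof.
move=> w1 w2; rewrite !inE => w1A _ /setP/(_ w1).
by rewrite !inE eqxx (negbTE w1A) !orbF => /esym/eqP.
Qed.

Lemma one_point_extension A X :
  A \subset X -> #|X| = #|A|.+1 -> exists2 w, w \in X :\: A & X = w |: A.
Proof.
move=> AX cardX; have /cards1P[w XA] : #|X :\: A| == 1.
  by rewrite cardsDS // cardX subSnn.
exists w; first by rewrite XA set11.
apply/setP => u; rewrite in_setU1; have /setP/(_ u) := XA.
rewrite !inE; case: (boolP (u \in A)) => [uA _ | _ <-]; last by rewrite orbF.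
by rewrite orbT (subsetP AX).
Qed.

Lemma card_one_point_extensions_le S A C :
    {in S, forall X, [/\ A \subset X, X \subset C & #|X| = #|A|.+1]} ->
  #|S| <= #|C :\: A|.
Proof.
move=> extS; apply: leq_trans (leq_imset_card (fun w => w |: A) _).
apply/subset_leq_card/subsetP => X /extS[AX XC cardX].
have [w wXA ->] := one_point_extension AX cardX.
apply: imset_f; move: wXA; rewrite !inE => /andP[-> wX].
by rewrite (subsetP XC).
Qed.

Lemma card_one_point_extensions A C :
  #|[set w |: A | w in C :\: A]| = #|C :\: A|.
Proof.
apply/card_in_imset/(sub_in2 _ (@setU1_inj_notin A)) => w.
by rewrite !inE => /andP[].
Qed.

End OnePointExtensions.

Lemma leq_sub_cardsD (T : finType) (A B : {set T}) : #|A| - #|B| <= #|A :\: B|.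
Proof. by rewrite -(cardsID B A) leq_subLR leq_add2r subset_leq_card ?subsetIr. Qed.

Lemma distn_leq a b m : a - b <= m -> b - a <= m -> distn a b <= m.
Proof. by rewrite /distn; lia. Qed.

Section IntraTriangles.
Variable V : finType.
Variable P : {set {set V}}.
Implicit Types (E : {set {set V}}) (C T : {set V}).

Definition intra_triangles E : {set {set V}} :=
  [set T : {set V} | [&& #|T| == 3,
        [forall x in T, forall y in T, (x != y) ==> ([set x; y] \in E)]
      & [exists C in P, T \subset C]]].

Lemma n_tri_intraE d (G : agraph V d) :
  n_tri_intra P G = #|intra_triangles (edges G)|.
Proof. by []. Qed.

Lemma mem_intra_triangles E C T :
    C \in P -> T \subset C -> #|T| = 3 ->
    {in T &, forall x y, x != y -> [set x; y] \in E} ->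
  T \in intra_triangles E.
Proof.
move=> CP TC T3 edgesT; rewrite inE T3 eqxx /=; apply/andP; split.
  by apply/forall_inP => x xT; apply/forall_inP => y yT; apply/implyP; apply: edgesT.
by apply/exists_inP; exists C.
Qed.

Lemma intra_trianglesS E E' : E' \subset E -> intra_triangles E' \subset intra_triangles E.
Proof.
move=> EE'; apply/subsetP => T; rewrite !inE => /and3P[-> /forall_inP edgesT ->].
rewrite andbT; apply/forall_inP => x xT; apply/forall_inP => y yT; apply/implyP => xy.
by apply: (subsetP EE'); have /forall_inP/(_ y yT)/implyP := edgesT x xT; apply.
Qed.

Lemma intra_triangle_lost_edge E E' T :
    T \in intra_triangles E :\: intra_triangles E' ->
  exists x y, [/\ x \in T, y \in T, x != y & [set x; y] \in E :\: E'].
Proof.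
rewrite !inE => /andP[+ /and3P[T3 /forall_inP edgesT TP]].
rewrite T3 TP andbT /= => /forall_inPn[x xT /forall_inPn[y yT]].
rewrite negb_imply => /andP[xy xyE']; exists x, y; split; rewrite ?inE ?xyE' //=.
by have /forall_inP/(_ y yT)/implyP := edgesT x xT; apply.
Qed.

Lemma intra_triangle_sub_block E C T x :
  trivIset P -> C \in P -> x \in C -> T \in intra_triangles E -> x \in T -> T \subset C.
Proof.
move=> tiP CP xC; rewrite inE => /and3P[_ _ /exists_inP[C' C'P TC']] xT.
by rewrite -(def_pblock tiP CP xC) (def_pblock tiP C'P (subsetP TC' x xT)).
Qed.

Lemma card_intra_triangles_diff_le E E' :
    trivIset P -> #|E :\: E'| <= 1 ->
  #|intra_triangles E :\: intra_triangles E'| <= \max_(C in P) (#|C| - 2).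
Proof.
move=> tiP /card_le1_eqP lost_edge_unique.
set D := intra_triangles E :\: intra_triangles E'.
have [-> | [T0 T0D]] := set_0Vmem D; first by rewrite cards0.
have [x [y [xT0 yT0 xy xyE]]] := intra_triangle_lost_edge T0D.
have xy_sub T : T \in D -> [set x; y] \subset T.
  move=> /intra_triangle_lost_edge[u [v [uT vT _ uvE]]].
  by rewrite -(lost_edge_unique _ _ xyE uvE) subUset !sub1set uT vT.
have /setDP[T0tri _] := T0D.
move: (T0tri); rewrite inE => /and3P[_ _ /exists_inP[C CP T0C]].
have card_xy : #|[set x; y]| = 2 by rewrite cards2 xy.
apply: leq_trans (leq_bigmax_cond _ CP).
rewrite -card_xy -cardsDS; last exact: subset_trans (xy_sub _ T0D) T0C.
apply: card_one_point_extensions_le => T TD; have /setDP[Ttri _] := TD.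
split; first exact: xy_sub.
  apply: intra_triangle_sub_block tiP CP (subsetP T0C x xT0) Ttri _.
  by rewrite (subsetP (xy_sub _ TD)) ?set21.
by move: Ttri; rewrite inE card_xy => /and3P[/eqP].
Qed.

Definition clique_edges C : {set {set V}} :=
  [set e : {set V} | (#|e| == 2) && (e \subset C)].

Lemma clique_minus_edge_loss C x y :
    C \in P -> x \in C -> y \in C -> x != y ->
  #|C| - 2 <= #|intra_triangles (clique_edges C)|
              - #|intra_triangles (clique_edges C :\ [set x; y])|.
Proof.
move=> CP xC yC xy; set e := [set x; y].
have card_e : #|e| = 2 by rewrite cards2 xy.
have eC : e \subset C by rewrite subUset !sub1set xC yC.
rewrite -cardsDS ?intra_trianglesS ?subD1set // -card_e -cardsDS //.
rewrite -card_one_point_extensions; apply/subset_leq_card/subsetP => X /imsetP[w].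
rewrite inE => /andP[we wC] ->{X}.
have wxyC : w |: e \subset C by rewrite subUset sub1set wC.
rewrite inE; apply/andP; split.
  rewrite inE; apply/negP => /and3P[_ /forall_inP edges_we _].
  have /forall_inP/(_ y (setU1r _ (set22 x y))) := edges_we x (setU1r _ (set21 x y)).
  by rewrite xy setD11.
apply: (mem_intra_triangles CP wxyC); first by rewrite cardsU1 we card_e.
move=> u v uT vT uv; rewrite inE cards2 uv eqxx /= subUset !sub1set.
by rewrite !(subsetP wxyC).
Qed.

Lemma n_tri_intra_neighbour_le d (G G' : agraph V d) :
    trivIset P -> at_neighbour G G' ->
  distn (n_tri_intra P G) (n_tri_intra P G') <= \max_(C in P) (#|C| - 2).
Proof.
move=> tiP; rewrite !n_tri_intraE.
case/orP => [/andP[/eqP card_symdiff _] | /andP[/eqP-> _]]; last by rewrite /distn subnn.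
apply: distn_leq;
  apply: leq_trans (leq_sub_cardsD _ _) (card_intra_triangles_diff_le tiP _);
  by rewrite -card_symdiff subset_leq_card ?subsetUl ?subsetUr.
Qed.

Lemma n_tri_intra_neighbour_witness d C :
    C \in P -> 1 < #|C| ->
  exists2 p : agraph V d * agraph V d,
    [&& simple_ag p.1, simple_ag p.2 & at_neighbour p.1 p.2]
    & #|C| - 2 <= distn (n_tri_intra P p.1) (n_tri_intra P p.2).
Proof.
move=> CP /card_gt1P[x [y [xC yC xy]]]; set E := clique_edges C; set e := [set x; y].
pose a : {ffun V -> d.-tuple bool} := [ffun=> nseq_tuple d false].
have eE : e \in E by rewrite inE cards2 xy eqxx subUset !sub1set xC yC.
exists ((E, a), (E :\ e, a)); last first.
  by rewrite !n_tri_intraE (leq_trans (clique_minus_edge_loss CP xC yC xy)) ?leq_addr.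
have simpleE : simple_ag (E, a) by apply/forall_inP => f; rewrite inE => /andP[].
have simpleE' : simple_ag (E :\ e, a).
  by apply/forall_inP => f; rewrite !inE => /andP[_ /andP[]].
rewrite /= simpleE simpleE' /at_neighbour /edges /attrs /= eqxx andbT; apply/orP; left.
have /eqP -> : (E :\ e) :\: E == set0 by rewrite setD_eq0 subD1set.
by rewrite setU0 setDDr setDv set0U (setIidPr _) ?cards1 ?sub1set.
Qed.

End IntraTriangles.

Theorem proposition3 (V : finType) (d : nat) (P : {set {set V}})
    (hP : partition P [set: V])
    (hbig : exists2 C, C \in P & 1 < #|C|) :
  global_sensitivity (n_tri_intra (d := d) P) = \max_(C in P) (#|C| - 2).
Proof.
have tiP : trivIset P by case/and3P: hP.
rewrite /global_sensitivity; apply/eqP; rewrite eqn_leq; apply/andP; split.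
  by apply/bigmax_leqP => -[G G'] /and3P[_ _]; apply: n_tri_intra_neighbour_le.
apply/bigmax_leqP => C CP; case: (leqP #|C| 2) => [|C_gt2].
  by rewrite -subn_eq0 => /eqP ->.
have [p p_nb loss] := n_tri_intra_neighbour_witness d CP (ltnW C_gt2).
by apply: leq_trans loss _; apply: leq_bigmax_cond.
Qed.
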